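(* Let $n\ge 2$ and $k\neq 0$ be integers, $\zeta=2\pi/n$, $s_1>0$, $\nu>0$. Let $u_n:\mathbb{R}\to\mathbb{C}$ be $2\pi$-periodic, define $u_j(t)=e^{ij\zeta}u_n(t+jk\zeta)$ and $q_j(t)=e^{it\sqrt{s_1}/\nu}u_j(t)$ for all integers $j$, and let $\Omega=\frac{1}{n}\left(k\frac{\sqrt{s_1}}{\nu}-1\right)$. Suppose $\Omega=p/q$ with $p,q$ integers, $q\ge1$, and $\gcd(q,n)=1$. Let $q^*$ be an integer with $qq^*\equiv 1 \pmod n$ and set $1_n=q^*q$ (so $1_n\equiv 1\pmod n$). Then for every integer $j$ and all $t$, $$q_j(t)=q_n\big(t+j\,1_n k\zeta\big).$$ Moreover, writing $\frac{np+q}{kq}=\frac{\ell}{m}$ with $\ell,m$ relatively prime integers and $m\ge1$, the function $q_n$ is $2\pi m$-periodic.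
   Context: Setting: $n$ unit masses in a frame rotating with angular frequency $\sqrt{s_1}$, $s_1=\frac14\sum_{j=1}^{n-1}\frac{\sin^2(j\zeta/2)}{\sin^3(j\zeta/2)}$; a planar Lyapunov orbit of frequency $\nu$, rescaled to period $2\pi$, has the symmetry $u_j(t)=e^{ij\zeta}u_n(t+jk\zeta)$, and $q_j$ are the inertial-frame positions (time rescaled by $\nu$). Note that $\sqrt{s_1}/\nu=(n\Omega+1)/k$. *)

From Stdlib Require Import Reals ZArith.
Open Scope R_scope.

Definition Cplx : Type := (R * R)%type.

Definition Cmul (z w : Cplx) : Cplx :=
  (fst z * fst w - snd z * snd w, fst z * snd w + snd z * fst w).

Definition Cexpi (theta : R) : Cplx := (cos theta, sin theta).

Definition zeta_of (n : Z) : R := 2 * PI / IZR n.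

Definition u_of (n k : Z) (un : R -> Cplx) (j : Z) (t : R) : Cplx :=
  Cmul (Cexpi (IZR j * zeta_of n)) (un (t + IZR j * IZR k * zeta_of n)).

Definition q_of (n k : Z) (s1 nu : R) (un : R -> Cplx) (j : Z) (t : R) : Cplx :=
  Cmul (Cexpi (t * sqrt s1 / nu)) (u_of n k un j t).

Definition Omega_of (n k : Z) (s1 nu : R) : R :=
  / IZR n * (IZR k * (sqrt s1 / nu) - 1).

(* Both claims come down to the same observation: [q_j(t) = e^{i(t w + j zeta)} u_n(t + j k zeta)]
   with [w = sqrt s1 / nu], so [q_j(t) = q_j'(t')] as soon as the phases [t w + j zeta] and the
   arguments [t + j k zeta] of the two sides differ by integer multiples of [2 PI].  The
   hypothesis on [Omega] says [k w q = n p + q]; with [q* q = 1 + r n] and [n zeta = 2 PI] the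
   required integers are explicit, and for the period [2 PI m] one uses [w m = l]. *)
From Stdlib Require Import Reals ZArith Lra Lia.
Open Scope R_scope.

Lemma periodic_mult_IZR (A : Type) (f : R -> A) (T : R) :
  (forall x, f (x + T) = f x) -> forall (z : Z) x, f (x + T * IZR z) = f x.
Proof.
  intros Hper.
  assert (Hnat : forall (m : nat) x, f (x + T * INR m) = f x).
  { induction m as [|m IH]; intros x.
    - simpl. f_equal. ring.
    - rewrite S_INR.
      replace (x + T * (INR m + 1)) with (x + T * INR m + T) by ring.
      rewrite Hper. apply IH. }
  intros z x. destruct (Z_le_gt_dec 0 z) as [Hz | Hz].
  - destruct (Z_of_nat_complete z Hz) as [m ->].
    rewrite <- INR_IZR_INZ. apply Hnat.
  - destruct (Z_of_nat_complete (- z) ltac:(lia)) as [m Hm].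
    replace z with (- Z.of_nat m)%Z by lia.
    rewrite opp_IZR, <- INR_IZR_INZ, <- (Hnat m (x + T * - INR m)).
    f_equal. ring.
Qed.

Lemma Cexpi_add_2PI (x : R) : Cexpi (x + 2 * PI) = Cexpi x.
Proof.
  unfold Cexpi. rewrite cos_plus, sin_plus, cos_2PI, sin_2PI. f_equal; ring.
Qed.

Lemma Cmul_Cexpi_Cexpi (a b : R) (z : Cplx) :
  Cmul (Cexpi a) (Cmul (Cexpi b) z) = Cmul (Cexpi (a + b)) z.
Proof.
  destruct z as [x y]. unfold Cmul, Cexpi; simpl.
  rewrite cos_plus, sin_plus. f_equal; ring.
Qed.

Lemma q_of_Cexpi (n k : Z) (s1 nu : R) (un : R -> Cplx) (j : Z) (t : R) :
  q_of n k s1 nu un j t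
  = Cmul (Cexpi (t * (sqrt s1 / nu) + IZR j * zeta_of n))
         (un (t + IZR j * IZR k * zeta_of n)).
Proof.
  unfold q_of, u_of. rewrite Cmul_Cexpi_Cexpi. do 3 f_equal. unfold Rdiv. ring.
Qed.

Lemma q_of_shift (n k : Z) (s1 nu : R) (un : R -> Cplx) (j j' : Z) (t t' : R) (a b : Z) :
  (forall x, un (x + 2 * PI) = un x) ->
  t' * (sqrt s1 / nu) + IZR j' * zeta_of n
    = t * (sqrt s1 / nu) + IZR j * zeta_of n + 2 * PI * IZR a ->
  t' + IZR j' * IZR k * zeta_of n = t + IZR j * IZR k * zeta_of n + 2 * PI * IZR b ->
  q_of n k s1 nu un j t = q_of n k s1 nu un j' t'.
Proof.
  intros Hper Hphase Harg.
  rewrite !q_of_Cexpi, Hphase, Harg, (periodic_mult_IZR _ _ _ Hper).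
  now rewrite (periodic_mult_IZR _ _ _ Cexpi_add_2PI).
Qed.

Lemma frequency_of_Omega (n k : Z) (s1 nu : R) (p q : Z) :
  IZR n <> 0 -> IZR q <> 0 -> Omega_of n k s1 nu = IZR p / IZR q ->
  IZR k * (sqrt s1 / nu) * IZR q = IZR n * IZR p + IZR q.
Proof.
  unfold Omega_of. set (w := sqrt s1 / nu). intros Hn Hq HOm.
  replace (IZR k * w) with (IZR n * (/ IZR n * (IZR k * w - 1)) + 1) by (field; exact Hn).
  rewrite HOm. field. exact Hq.
Qed.

Lemma frequency_mul_denominator (n k p q l m : Z) (w : R) :
  IZR k <> 0 -> IZR q <> 0 -> IZR m <> 0 ->
  IZR k * w * IZR q = IZR n * IZR p + IZR q ->
  IZR (n * p + q) / IZR (k * q) = IZR l / IZR m -> w * IZR m = IZR l.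
Proof.
  intros Hk Hq Hm Hkw Hlm. rewrite plus_IZR, !mult_IZR in Hlm.
  replace w with ((IZR n * IZR p + IZR q) / (IZR k * IZR q)) by (rewrite <- Hkw; field; auto).
  rewrite Hlm. field. exact Hm.
Qed.

Lemma inverse_mod_witness (n q qstar : Z) :
  n <> 0%Z -> ((q * qstar - 1) mod n = 0)%Z ->
  exists r : Z, IZR qstar * IZR q = 1 + IZR r * IZR n.
Proof.
  intros Hn Hmod. destruct (proj1 (Z.mod_divide _ _ Hn) Hmod) as [r Hr].
  exists r. rewrite <- !mult_IZR, <- plus_IZR. f_equal. lia.
Qed.

Theorem proposition1 (n k : Z) (s1 nu : R) (un : R -> Cplx) (p q qstar : Z) :
  (2 <= n)%Z -> k <> 0%Z -> 0 < s1 -> 0 < nu ->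
  (forall t : R, un (t + 2 * PI) = un t) ->
  Omega_of n k s1 nu = IZR p / IZR q ->
  (1 <= q)%Z -> Z.gcd q n = 1%Z ->
  ((q * qstar - 1) mod n = 0)%Z ->
  (forall (j : Z) (t : R),
      q_of n k s1 nu un j t
      = q_of n k s1 nu un n (t + IZR j * IZR (qstar * q) * IZR k * zeta_of n))
  /\
  (forall l m : Z, Z.gcd l m = 1%Z -> (1 <= m)%Z ->
      IZR (n * p + q) / IZR (k * q) = IZR l / IZR m ->
      forall t : R, q_of n k s1 nu un n (t + 2 * PI * IZR m) = q_of n k s1 nu un n t).
Proof.
  intros Hn Hk _ _ Hper HOm Hq _ Hmod.
  assert (Hn0 : IZR n <> 0) by (apply not_0_IZR; lia).
  assert (Hq0 : IZR q <> 0) by (apply not_0_IZR; lia).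
  pose proof (frequency_of_Omega _ _ _ _ _ _ Hn0 Hq0 HOm) as Hkw.
  set (w := sqrt s1 / nu) in *.
  assert (Hzeta : IZR n * zeta_of n = 2 * PI) by (unfold zeta_of; field; exact Hn0).
  split.
  - intros j t. destruct (inverse_mod_witness n q qstar ltac:(lia) Hmod) as [r Hr].
    apply (q_of_shift _ _ _ _ _ _ _ _ _ (j * qstar * p + j * r + 1) (j * r * k + k) Hper);
      fold w; rewrite <- Hzeta, !plus_IZR, !mult_IZR.
    + transitivity (t * w + IZR j * zeta_of n * IZR qstar * (IZR k * w * IZR q)
                      + IZR n * zeta_of n); [ring |].
      rewrite Hkw.
      transitivity (t * w + IZR j * zeta_of n * (IZR qstar * IZR q)
                      + IZR n * zeta_of n * (IZR j * IZR qstar * IZR p + 1)); [ring |].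
      rewrite Hr. ring.
    + rewrite Hr. ring.
  - intros l m _ Hm Hlm t.
    assert (Hwm : w * IZR m = IZR l).
    { apply (frequency_mul_denominator n k p q); try (apply not_0_IZR; lia); assumption. }
    symmetry. apply (q_of_shift _ _ _ _ _ _ _ _ _ l m Hper); fold w.
    + rewrite <- Hwm. ring.
    + ring.
Qed.
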